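(* Let $\mathcal{X},\Theta$ be sets, and let $f_{\boldsymbol\theta}(\mathbf{x})=\operatorname{Tr}[\rho(\mathbf{x})O(\boldsymbol\theta)]$ be a conventional model on $n$ qubits, where each $\rho(\mathbf{x})$ is an $n$-qubit density matrix and each $O(\boldsymbol\theta)$ is an $n$-qubit Hermitian operator, and suppose $T\ge\sup_{\boldsymbol\theta\in\Theta}\|O(\boldsymbol\theta)\|_1$ with $T>0$. Then there exist $(n+1)$-qubit density matrices $\rho'(\boldsymbol\theta)$ ($\boldsymbol\theta\in\Theta$) and $(n+1)$-qubit Hermitian operators $O'(\mathbf{x})$ ($\mathbf{x}\in\mathcal{X}$) with $\sup_{\mathbf{x}}\|O'(\mathbf{x})\|_\infty\le T$ (with equality when some $\rho(\mathbf{x})$ is pure) such that $\operatorname{Tr}[\rho'(\boldsymbol\theta)O'(\mathbf{x})]=\operatorname{Tr}[\rho(\mathbf{x})O(\boldsymbol\theta)]$ for all $\mathbf{x}\in\mathcal{X}$, $\boldsymbol\theta\in\Theta$. Moreover $O'(\mathbf{x})$ can be taken to be $T\,(|0\rangle\langle0|-|1\rangle\langle1|)\otimes\rho(\mathbf{x})$.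
   Context: $\|A\|_1=\operatorname{Tr}\sqrt{A^2}$ is the trace norm and $\|A\|_\infty$ the spectral norm of a Hermitian operator $A$. *)

From mathcomp Require Import all_boot all_order all_algebra.
From mathcomp.real_closed Require Export mxtens.
Set Implicit Arguments. Unset Strict Implicit. Unset Printing Implicit Defensive.
Import Order.TTheory GRing.Theory Num.Theory.
Local Open Scope ring_scope.

Section Defs.
Variable C : numClosedFieldType.

Definition dagger m n (A : 'M[C]_(m, n)) : 'M[C]_(n, m) := (map_mx Num.conj A)^T.

Definition herm n (A : 'M[C]_n) : Prop := dagger A = A.

Definition psd n (A : 'M[C]_n) : Prop :=
  herm A /\ forall v : 'cV[C]_n, 0 <= (dagger v *m A *m v) 0 0.

Definition density n (rho : 'M[C]_n) : Prop := psd rho /\ \tr rho = 1.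

Definition pure n (rho : 'M[C]_n) : Prop :=
  exists psi : 'cV[C]_n, (dagger psi *m psi) 0 0 = 1 /\ rho = psi *m dagger psi.

Definition vnorm2 n (v : 'cV[C]_n) : C := \sum_i `|v i 0| ^+ 2.

(* ||A||_1 = Tr sqrt(A^2) <= t, where sqrt(A^2) is the (unique) PSD square root of A^2 *)
Definition tracenorm_le n (A : 'M[C]_n) (t : C) : Prop :=
  exists B : 'M[C]_n, psd B /\ B *m B = A *m A /\ \tr B <= t.

Definition opnorm_le n (A : 'M[C]_n) (t : C) : Prop :=
  forall v : 'cV[C]_n, vnorm2 (A *m v) <= t ^+ 2 * vnorm2 v.

Definition opnorm_attains n (A : 'M[C]_n) (t : C) : Prop :=
  exists v : 'cV[C]_n, v != 0 /\ vnorm2 (A *m v) = t ^+ 2 * vnorm2 v.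

Definition pauliZ : 'M[C]_2 := delta_mx 0 0 - delta_mx 1 1.

End Defs.

From mathcomp Require Import all_boot all_order all_algebra.
From mathcomp.real_closed Require Import mxtens.
From mathcomp Require Import sesquilinear spectral.
From mathcomp Require Import ring.
From Stdlib Require Import ClassicalEpsilon.
Set Implicit Arguments. Unset Strict Implicit. Unset Printing Implicit Defensive.
Import Order.TTheory GRing.Theory Num.Theory.
Local Open Scope ring_scope.

(* Theorem 4 (swapping data and parameters): a model f(x, th) = Tr[rho(x) O(th)]
   with ||O(th)||_1 <= T is realized on one extra qubit by the states
   rho'(th) = T^-1 (|0><0| (x) P(th) + |1><1| (x) N(th)) and the observables
   O'(x) = T Z (x) rho(x), where O(th) = P(th) - N(th) with P, N psd and
   Tr P + Tr N = T. *)

Section Adjoint.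
Variable C : numClosedFieldType.

Lemma daggerE m n (A : 'M[C]_(m, n)) i j : dagger A i j = (A j i)^*.
Proof. by rewrite /dagger !mxE. Qed.

Lemma dagger_mul m n p (A : 'M[C]_(m, n)) (B : 'M[C]_(n, p)) :
  dagger (A *m B) = dagger B *m dagger A.
Proof. by rewrite /dagger map_mxM trmx_mul. Qed.

Lemma daggerK m n (A : 'M[C]_(m, n)) : dagger (dagger A) = A.
Proof. by apply/matrixP => i j; rewrite !daggerE conjCK. Qed.

Lemma daggerD m n (A B : 'M[C]_(m, n)) : dagger (A + B) = dagger A + dagger B.
Proof. by apply/matrixP => i j; rewrite !daggerE !mxE rmorphD. Qed.

Lemma daggerN m n (A : 'M[C]_(m, n)) : dagger (- A) = - dagger A.
Proof. by apply/matrixP => i j; rewrite !daggerE !mxE rmorphN. Qed.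

Lemma daggerZ m n a (A : 'M[C]_(m, n)) : dagger (a *: A) = a^* *: dagger A.
Proof. by apply/matrixP => i j; rewrite !daggerE !mxE rmorphM. Qed.

Lemma dagger_tens m n p q (A : 'M[C]_(m, n)) (B : 'M[C]_(p, q)) :
  dagger (A *t B) = dagger A *t dagger B.
Proof. by rewrite /dagger map_mxT trmx_tens. Qed.

Lemma dagger_diag n (d : 'rV[C]_n) : dagger (diag_mx d) = diag_mx (map_mx Num.conj d).
Proof.
apply/matrixP => i j; rewrite daggerE !mxE.
by have [->|_] := eqVneq j i; rewrite ?mulr1n ?mulr0n ?rmorph0.
Qed.

Lemma dagger_delta m n (i : 'I_m) (j : 'I_n) :
  dagger (delta_mx i j : 'M[C]_(m, n)) = delta_mx j i.
Proof. by apply/matrixP => k l; rewrite daggerE !mxE rmorph_nat andbC. Qed.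

Lemma hermZ n (a : C) (A : 'M[C]_n) : a \is Num.real -> herm A -> herm (a *: A).
Proof. by move=> ar hA; rewrite /herm daggerZ hA conj_Creal. Qed.

End Adjoint.

Section QuadraticForm.
Variable C : numClosedFieldType.

Definition qform n (M : 'M[C]_n) (v : 'cV[C]_n) : C := (dagger v *m M *m v) 0 0.

Lemma qformE n (M : 'M[C]_n) v :
  qform M v = \sum_i \sum_j (v i 0)^* * M i j * v j 0.
Proof.
rewrite /qform mxE exchange_big /=; apply: eq_bigr => j _; rewrite mxE mulr_suml.
by apply: eq_bigr => i _; rewrite daggerE.
Qed.

Lemma qformD n (M N : 'M[C]_n) v : qform (M + N) v = qform M v + qform N v.
Proof. by rewrite /qform mulmxDr mulmxDl mxE. Qed.

Lemma qformN n (M : 'M[C]_n) v : qform (- M) v = - qform M v.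
Proof. by rewrite /qform mulmxN mulNmx mxE. Qed.

Lemma qformZ n a (M : 'M[C]_n) v : qform (a *: M) v = a * qform M v.
Proof. by rewrite /qform -scalemxAr -scalemxAl mxE. Qed.

Lemma qform_congr n (U M : 'M[C]_n) v : qform (dagger U *m M *m U) v = qform M (U *m v).
Proof. by rewrite /qform dagger_mul !mulmxA. Qed.

Lemma qform_expand n (M : 'M[C]_n) u w c :
  qform M (u + c *: w) = qform M u + c * (dagger u *m M *m w) 0 0
    + c^* * (dagger w *m M *m u) 0 0 + c^* * c * qform M w.
Proof.
rewrite /qform daggerD daggerZ !mulmxDl !mulmxDr -!scalemxAl -!scalemxAr !mxE.
by rewrite !addrA mulrA.
Qed.

Lemma bform_delta n (M : 'M[C]_n) i j :
  (dagger (delta_mx i 0 : 'cV_n) *m M *m (delta_mx j 0 : 'cV_n)) 0 0 = M i j.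
Proof. by rewrite dagger_delta -(rowE i M) -colE !mxE. Qed.

(* Polarization over C: a matrix whose quadratic form vanishes is zero. *)
Lemma qform_eq0 n (M : 'M[C]_n) : (forall v, qform M v = 0) -> M = 0.
Proof.
move=> h; apply/matrixP => i j; rewrite mxE.
have h1 := qform_expand M (delta_mx i 0) (delta_mx j 0) 1.
have h2 := qform_expand M (delta_mx i 0) (delta_mx j 0) 'i.
rewrite !h !bform_delta rmorph1 in h1; rewrite !h !bform_delta conjCi in h2.
have antisym : M j i = - M i j.
  by apply/eqP; rewrite -addr_eq0 addrC; apply/eqP; rewrite [RHS]h1; ring.
rewrite antisym in h2.
have : 'i * (M i j *+ 2) = 0 by rewrite [RHS]h2; ring.
by move/eqP; rewrite mulf_eq0 (negbTE (@neq0Ci C)) /= mulrn_eq0 /= => /eqP.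
Qed.

Lemma self_dot_eq0 n (w : 'cV[C]_n) : (dagger w *m w) 0 0 = 0 -> w = 0.
Proof.
rewrite mxE => /eqP; rewrite psumr_eq0 => [/allP h|k _]; last first.
  by rewrite daggerE mulrC mul_conjC_ge0.
apply/matrixP => k l; rewrite [l]ord1 mxE.
have /implyP := h k (mem_index_enum _) => /(_ isT).
by rewrite daggerE mulrC mul_conjC_eq0 => /eqP.
Qed.

Lemma herm_sq_eq0 n (X : 'M[C]_n) : herm X -> X *m X = 0 -> X = 0.
Proof.
move=> hX XX; apply/matrixP => i j; rewrite mxE.
have : X *m (delta_mx j 0 : 'cV_n) = 0.
  apply: self_dot_eq0; rewrite dagger_mul hX -mulmxA [X *m (X *m _)]mulmxA XX.
  by rewrite mul0mx mulmx0 mxE.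
by rewrite -colE => /matrixP /(_ i 0); rewrite !mxE.
Qed.

Lemma psdD n (M N : 'M[C]_n) : psd M -> psd N -> psd (M + N).
Proof.
move=> [hM pM] [hN pN]; split; first by rewrite /herm daggerD hM hN.
by move=> v; rewrite -/(qform _ _) qformD addr_ge0 ?pM ?pN.
Qed.

Lemma psdZ n a (M : 'M[C]_n) : 0 <= a -> psd M -> psd (a *: M).
Proof.
move=> a0 [hM pM]; split; first by apply: hermZ; rewrite ?ger0_real.
by move=> v; rewrite -/(qform _ _) qformZ mulr_ge0 ?pM.
Qed.

Lemma psd_congr n (U M : 'M[C]_n) : psd M -> psd (dagger U *m M *m U).
Proof.
move=> [hM pM]; split; first by rewrite /herm !dagger_mul daggerK hM mulmxA.
by move=> v; rewrite -/(qform _ _) qform_congr; apply: pM.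
Qed.

Lemma qform_diag n (e : 'rV[C]_n) v :
  qform (diag_mx e) v = \sum_i e 0 i * ((v i 0)^* * v i 0).
Proof.
rewrite qformE; apply: eq_bigr => i _.
rewrite (bigD1 i) //= big1 ?addr0 => [|j /negbTE ji]; last first.
  by rewrite !mxE eq_sym ji mulr0n mulr0 mul0r.
by rewrite !mxE eqxx mulr1n mulrCA mulrA.
Qed.

Lemma diag_psd n (e : 'rV[C]_n) : (forall i, 0 <= e 0 i) -> psd (diag_mx e).
Proof.
move=> e0; split.
  rewrite /herm dagger_diag; congr diag_mx; apply/matrixP => i j.
  by rewrite mxE [i]ord1 geC0_conj.
move=> v; rewrite -/(qform _ _) qform_diag; apply: sumr_ge0 => i _.
by apply: mulr_ge0 => //; rewrite mulrC mul_conjC_ge0.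
Qed.

Lemma psd1 n : psd (1%:M : 'M[C]_n).
Proof. by rewrite -diag_const_mx; apply: diag_psd => i; rewrite mxE ler01. Qed.

End QuadraticForm.

Section SquareRoot.
Variable C : numClosedFieldType.

Lemma herm_spectral n (A : 'M[C]_n) : herm A -> exists (U : 'M[C]_n) (d : 'rV[C]_n),
  [/\ U *m dagger U = 1%:M, dagger U *m U = 1%:M, forall i, d 0 i \is Num.real
    & A = dagger U *m diag_mx d *m U].
Proof.
move=> hA.
have hA' : A \is hermsymmx.
  by apply/is_hermitianmxP; rewrite expr0 scale1r -map_trmx -[A in LHS]hA.
have dU : dagger (spectralmx A) = (spectralmx A)^t*%sesqui by rewrite /dagger map_trmx.
have Un := spectral_unitarymx A.
exists (spectralmx A), (spectral_diag A); split.
- by rewrite dU; apply/unitarymxP.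
- by apply: mulmx1C; rewrite dU; apply/unitarymxP.
- by move=> i; have /mxOverP := hermitian_spectral_diag_real hA'; apply.
- have := orthomx_spectralP (hermitian_normalmx hA').
  by rewrite invmx_unitary // -dU.
Qed.

Lemma commute_diag_sq n (M : 'M[C]_n) (a : 'rV[C]_n) : (forall i, 0 <= a 0 i) ->
  M *m diag_mx (\row_i (a 0 i ^+ 2)) = diag_mx (\row_i (a 0 i ^+ 2)) *m M ->
  M *m diag_mx a = diag_mx a *m M.
Proof.
move=> a0 /matrixP comm2; apply/matrixP => i j; rewrite mul_mx_diag mul_diag_mx !mxE.
move: (comm2 i j); rewrite mul_mx_diag mul_diag_mx !mxE => comm2ij.
have : M i j * (a 0 j - a 0 i) * (a 0 j + a 0 i) = 0.
  by transitivity (M i j * a 0 j ^+ 2 - a 0 i ^+ 2 * M i j); [ring | rewrite comm2ij subrr].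
move/eqP; rewrite !mulf_eq0 subr_eq0 paddr_eq0 // => /orP [/orP [/eqP -> | /eqP ->] |].
- by rewrite mul0r mulr0.
- by rewrite mulrC.
- by case/andP => /eqP -> /eqP ->; rewrite mulr0 mul0r.
Qed.

(* With X = B - Q one has X (B + Q) = 0,
   so X^3 = 2 XBX = -2 XQX has a form both >= 0 and <= 0; hence X^3 = 0 and,
   X being Hermitian, X = 0. *)
Lemma psd_sqrt_unique n (B Q : 'M[C]_n) :
  psd B -> psd Q -> B *m Q = Q *m B -> B *m B = Q *m Q -> B = Q.
Proof.
move=> [hB pB] [hQ pQ] BQ BB.
pose X := B - Q.
have hX : herm X by rewrite /herm /X daggerD daggerN hB hQ.
have sandwich M v : qform (X *m M *m X) v = qform M (X *m v).
  by rewrite -qform_congr hX.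
have XBQ : X *m (B + Q) = 0.
  by rewrite /X mulmxBl !mulmxDr BB BQ [_ + Q *m Q]addrC subrr.
have XQ : X *m Q = - (X *m B).
  by apply/eqP; rewrite -addr_eq0 -mulmxDr addrC XBQ.
have XX_B : X *m X = X *m B + X *m B by rewrite {2}/X mulmxBr XQ opprK.
have XX_Q : X *m X = - (X *m Q) - X *m Q by rewrite XX_B XQ opprK.
have X3 : X *m X *m X = 0.
  apply: qform_eq0 => v; apply/le_anti/andP; split.
  - rewrite XX_Q mulmxDl !mulNmx qformD !qformN !sandwich -opprD oppr_le0.
    by rewrite addr_ge0 ?pQ.
  - by rewrite XX_B mulmxDl qformD !sandwich addr_ge0 ?pB.
have XX0 : X *m X = 0.
  apply: herm_sq_eq0; first by rewrite /herm dagger_mul hX.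
  by rewrite mulmxA X3 mul0mx.
by apply/eqP; rewrite -subr_eq0 -/X (herm_sq_eq0 hX XX0).
Qed.

Lemma jordan_decomposition n (O B : 'M[C]_n) : herm O -> psd B -> B *m B = O *m O ->
  psd (B + O) /\ psd (B - O).
Proof.
move=> hO psdB BB.
have [U [d [UU UU' dr eO]]] := herm_spectral hO.
pose D := diag_mx d; pose Q := diag_mx (\row_i `|d 0 i|).
pose B' := U *m B *m dagger U.
have eB : B = dagger U *m B' *m U.
  by rewrite /B' !mulmxA UU' mul1mx -mulmxA UU' mulmx1.
have psdB' : psd B' by have := psd_congr (dagger U) psdB; rewrite daggerK.
have psdQ : psd Q by apply: diag_psd => i; rewrite mxE normr_ge0.
have QQ : Q *m Q = D *m D.
  rewrite !mulmx_diag; congr diag_mx; apply/matrixP => i j.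
  by rewrite [i]ord1 !mxE -!expr2 real_normK.
have BB' : B' *m B' = Q *m Q.
  have unconj M : U *m (dagger U *m M *m U) *m dagger U = M.
    by rewrite !mulmxA UU mul1mx -mulmxA UU mulmx1.
  have OO : O *m O = dagger U *m (D *m D) *m U.
    by rewrite eO !mulmxA -[_ *m U *m dagger U]mulmxA UU mulmx1.
  by rewrite QQ -(unconj (D *m D)) -OO -BB /B' !mulmxA -[_ *m dagger U *m U]mulmxA UU' mulmx1.
have commBQ : B' *m Q = Q *m B'.
  apply: commute_diag_sq => [i|]; first by rewrite mxE normr_ge0.
  have -> : diag_mx (\row_i ((\row_j `|d 0 j|) 0 i ^+ 2)) = Q *m Q.
    by rewrite mulmx_diag; congr diag_mx; apply/matrixP => i j; rewrite !mxE expr2.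
  by rewrite -BB' mulmxA.
have eB'Q : B' = Q := psd_sqrt_unique psdB' psdQ commBQ BB'.
rewrite eB eO eB'Q -mulmxDl -mulmxDr -mulmxBl -mulmxBr.
split; apply: psd_congr.
- rewrite -raddfD /=; apply: diag_psd => i; rewrite !mxE.
  by rewrite -[X in _ + X]opprK subr_ge0 -normrN real_ler_norm // rpredN.
- rewrite -raddfB /=; apply: diag_psd => i; rewrite !mxE.
  by rewrite subr_ge0 real_ler_norm.
Qed.

End SquareRoot.

(* A Hermitian O with trace norm at most T splits as O = P - N with P, N psd
   and Tr P + Tr N = T exactly (pad the Jordan parts with a multiple of 1). *)
Lemma tracenorm_split (C : numClosedFieldType) n (O : 'M[C]_n) (T : C) :
  (0 < n)%N -> herm O -> tracenorm_le O T ->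
  exists P N : 'M[C]_n, [/\ psd P, psd N, P - N = O & \tr P + \tr N = T].
Proof.
move=> n_gt0 hO [B [psdB [BB trB]]].
have [psdBO psdBO'] := jordan_decomposition hO psdB BB.
have n_neq0 : (n%:R : C) != 0 by rewrite pnatr_eq0 -lt0n.
pose s := (T - \tr B) / (2 * n%:R).
have s_ge0 : 0 <= s by rewrite divr_ge0 ?subr_ge0 // mulr_ge0 ?ler0n.
have half_ge0 : 0 <= (2^-1 : C) by rewrite invr_ge0 ler0n.
exists (2^-1 *: (B + O) + s *: 1%:M), (2^-1 *: (B - O) + s *: 1%:M); split.
- by apply: psdD; apply: psdZ => //; exact: psd1.
- by apply: psdD; apply: psdZ => //; exact: psd1.
- by apply/matrixP => i j; rewrite !mxE; field.
- rewrite !(mxtraceD, mxtraceZ) raddfN /= mxtrace1 /s.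
  by field.
Qed.

Section Contraction.
Variable C : numClosedFieldType.

Lemma vnorm2E n (w : 'cV[C]_n) : vnorm2 w = qform 1%:M w.
Proof.
rewrite /qform mulmx1 mxE /vnorm2; apply: eq_bigr => i _.
by rewrite normCK daggerE mulrC.
Qed.

Lemma vnorm2Z n (c : C) (w : 'cV[C]_n) : vnorm2 (c *: w) = `|c| ^+ 2 * vnorm2 w.
Proof.
by rewrite /vnorm2 mulr_sumr; apply: eq_bigr => i _; rewrite mxE normrM exprMn.
Qed.

(* A density matrix is a contraction: its eigenvalues lie in [0, 1], so
   |rho v|^2 = v^* rho^2 v <= v^* v. *)
Lemma density_contract n (rho : 'M[C]_n) v : density rho -> vnorm2 (rho *m v) <= vnorm2 v.
Proof.
move=> [[hr pr] tr1].
have [U [e [UU UU' _ er]]] := herm_spectral hr.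
have psdE : psd (diag_mx e).
  have := psd_congr (dagger U) (conj hr pr).
  by rewrite daggerK er !mulmxA UU mul1mx -mulmxA UU mulmx1.
have e_ge0 i : 0 <= e 0 i.
  by case: psdE => _ /(_ (delta_mx i 0)); rewrite bform_delta mxE eqxx mulr1n.
have e_sum : \sum_i e 0 i = 1.
  by rewrite -mxtrace_diag -tr1 er mxtrace_mulC mulmxA UU mul1mx.
have e_le1 i : e 0 i <= 1 by rewrite -e_sum (bigD1 i) //= lerDl sumr_ge0.
have -> : vnorm2 (rho *m v) = qform (dagger U *m diag_mx (\row_i (e 0 i * e 0 i)) *m U) v.
  rewrite vnorm2E /qform dagger_mul hr mulmx1 !mulmxA -mulmx_diag.
  by rewrite {1 2}er !mulmxA -[_ *m U *m dagger U]mulmxA UU mulmx1.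
have -> : vnorm2 v = qform (dagger U *m 1%:M *m U) v by rewrite vnorm2E mulmx1 UU'.
rewrite -subr_ge0 -qformN -qformD -mulmxBl -mulmxBr -diag_const_mx -raddfB /= qform_congr.
have [i|_ psd_ok] := @diag_psd C n (const_mx 1 - \row_i (e 0 i * e 0 i)); last exact: psd_ok.
by rewrite !mxE subr_ge0 mulr_ile1.
Qed.

End Contraction.

Section Tensor.
Variable C : numClosedFieldType.

Lemma tensNmx m n p q (A : 'M[C]_(m, n)) (B : 'M[C]_(p, q)) : (- A) *t B = - (A *t B).
Proof. by apply/matrixP => i j; rewrite !mxE mulNr. Qed.

Lemma sum_tens m n (F : 'I_(m * n) -> C) :
  \sum_k F k = \sum_(a < m) \sum_(i < n) F (mxtens_index (a, i)).
Proof.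
rewrite (reindex (@mxtens_index m n)) /=; last first.
  by exists (@mxtens_unindex m n) => k _; rewrite (mxtens_indexK, mxtens_unindexK).
by rewrite pair_big; apply: eq_bigr => -[a i].
Qed.

Lemma trace_tens m n (A : 'M[C]_m) (B : 'M[C]_n) : \tr (A *t B) = \tr A * \tr B.
Proof. by rewrite /mxtrace mulr_sum; apply: eq_bigr => k _; rewrite mxE. Qed.

Lemma trace_delta n (a : 'I_n) : \tr (delta_mx a a : 'M[C]_n) = 1.
Proof.
rewrite /mxtrace (bigD1 a) //= big1 ?addr0 => [|k /negbTE ka]; first by rewrite mxE eqxx.
by rewrite mxE ka.
Qed.

Definition slice m n (a : 'I_m) (v : 'cV[C]_(m * n)) : 'cV[C]_n :=
  \col_i v (mxtens_index (a, i)) 0.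

Lemma vnorm2_slices m n (v : 'cV[C]_(m * n)) : vnorm2 v = \sum_a vnorm2 (slice a v).
Proof.
rewrite /vnorm2 sum_tens; apply: eq_bigr => a _; apply: eq_bigr => i _.
by rewrite mxE.
Qed.

Lemma slice_tens_diag m n (A : 'M[C]_m) (M : 'M[C]_n) v a :
  (forall b c, b != c -> A b c = 0) ->
  slice a ((A *t M) *m v) = A a a *: (M *m slice a v).
Proof.
move=> A_diag; apply/matrixP => i k; rewrite [k]ord1 !mxE sum_tens.
rewrite (bigD1 a) //= [X in _ + X]big1 ?addr0 => [|b ba]; last first.
  by apply: big1 => j _; rewrite tensmxE A_diag 1?eq_sym // !mul0r.
rewrite mulr_sumr; apply: eq_bigr => j _.
by rewrite tensmxE !mxE mulrA.
Qed.

(* |a><a| (x) M is psd when M is: its form only sees the a-th slice. *)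
Lemma psd_tens_delta m n (a : 'I_m) (M : 'M[C]_n) : psd M -> psd (delta_mx a a *t M).
Proof.
move=> [hM pM]; split; first by rewrite /herm dagger_tens dagger_delta hM.
move=> v; rewrite -/(qform _ _).
suff -> : qform (delta_mx a a *t M) v = qform M (slice a v) by apply: pM.
rewrite !qformE sum_tens.
under eq_bigr => b _ do under eq_bigr => i _ do rewrite sum_tens.
rewrite (bigD1 a) //= [X in _ + X]big1 ?addr0 => [|b /negbTE ba]; last first.
  apply: big1 => i _; apply: big1 => c _; apply: big1 => j _.
  by rewrite tensmxE mxE ba /= mul0r mulr0 mul0r.
apply: eq_bigr => i _.
rewrite (bigD1 a) //= [X in _ + X]big1 ?addr0 => [|c /negbTE ca]; last first.
  by apply: big1 => j _; rewrite tensmxE mxE ca andbF mul0r mulr0 mul0r.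
by apply: eq_bigr => j _; rewrite tensmxE !mxE eqxx mul1r.
Qed.

End Tensor.

Section PauliZ.
Variable C : numClosedFieldType.

Lemma pauliZ_offdiag (a b : 'I_2) : a != b -> pauliZ C a b = 0.
Proof. by case: a b => [[|[|//]] ?] [[|[|//]] ?]; rewrite // !mxE /= subrr. Qed.

Lemma norm_pauliZ_diag (a : 'I_2) : `|pauliZ C a a| = 1.
Proof.
by case: a => [[|[|//]] ?]; rewrite !mxE /= ?subr0 ?sub0r ?normrN normr1.
Qed.

Lemma pauliZ_herm : herm (pauliZ C).
Proof. by rewrite /herm /pauliZ daggerD daggerN !dagger_delta. Qed.

Lemma pauliZ_e0 : pauliZ C *m (delta_mx 0 0 : 'cV[C]_2) = delta_mx 0 0.
Proof. by rewrite /pauliZ mulmxBl mul_delta_mx mul_delta_mx_0 // subr0. Qed.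

Lemma proj0_pauliZ : (delta_mx 0 0 : 'M[C]_2) *m pauliZ C = delta_mx 0 0.
Proof. by rewrite /pauliZ mulmxBr mul_delta_mx mul_delta_mx_0 // subr0. Qed.

Lemma proj1_pauliZ : (delta_mx 1 1 : 'M[C]_2) *m pauliZ C = - delta_mx 1 1.
Proof. by rewrite /pauliZ mulmxBr mul_delta_mx mul_delta_mx_0 // sub0r. Qed.

(* Z (x) M is a contraction whenever M is: Z acts on each slice by a sign. *)
Lemma pauliZ_tens_contract n (M : 'M[C]_n) v :
  (forall w, vnorm2 (M *m w) <= vnorm2 w) -> vnorm2 ((pauliZ C *t M) *m v) <= vnorm2 v.
Proof.
move=> M_contr; rewrite !vnorm2_slices; apply: ler_sum => a _.
rewrite slice_tens_diag; last exact: pauliZ_offdiag.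
by rewrite vnorm2Z norm_pauliZ_diag expr1n mul1r M_contr.
Qed.

Lemma slice_e0_tens n (psi : 'cV[C]_n) : slice 0 ((delta_mx 0 0 : 'cV[C]_2) *t psi) = psi.
Proof.
apply/matrixP => i k; rewrite [k]ord1 !mxE mxtens_indexK /=.
by rewrite mul1r (ord1 (Ordinal _)).
Qed.

(* For a pure state |psi><psi|, the bound T on T Z (x) |psi><psi| is attained at |0> (x) psi. *)
Lemma pauliZ_tens_pure_attains n (rho : 'M[C]_n) (T : C) : 0 < T ->
  pure rho -> opnorm_attains (T *: (pauliZ C *t rho)) T.
Proof.
move=> T_gt0 [psi [psi_unit ->]].
pose v : 'cV[C]_(2 * n) := (delta_mx 0 0 : 'cV[C]_2) *t psi.
have psi_psi : dagger psi *m psi = 1%:M.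
  by apply/matrixP => i j; rewrite !ord1 psi_unit mxE.
have eigen : T *: (pauliZ C *t (psi *m dagger psi)) *m v = T *: v.
  rewrite -scalemxAl; congr (_ *: _).
  have := tensmx_mul (pauliZ C) (psi *m dagger psi) (delta_mx 0 0 : 'cV[C]_2) psi.
  by rewrite -mulmxA psi_psi mulmx1 pauliZ_e0.
exists v; split; last by rewrite eigen vnorm2Z gtr0_norm.
apply/eqP => v0.
have psi0 : psi = 0.
  by rewrite -(slice_e0_tens psi) -/v v0; apply/matrixP => i j; rewrite !mxE.
by move: psi_unit; rewrite psi0 mulmx0 mxE => /eqP; rewrite eq_sym oner_eq0.
Qed.

End PauliZ.

Section ObservableBounds.
Variable C : numClosedFieldType.

Lemma pauliZ_tens_herm n (rho : 'M[C]_n) (T : C) : 0 < T -> density rho ->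
  herm (T *: (pauliZ C *t rho)).
Proof.
move=> T_gt0 [[hrho _] _]; apply: hermZ; first by rewrite gtr0_real.
by rewrite /herm dagger_tens pauliZ_herm hrho.
Qed.

Lemma pauliZ_tens_opnorm n (rho : 'M[C]_n) (T : C) : 0 < T -> density rho ->
  opnorm_le (T *: (pauliZ C *t rho)) T.
Proof.
move=> T_gt0 rho_dens v; rewrite -scalemxAl vnorm2Z gtr0_norm //.
apply: ler_wpM2l; first by rewrite exprn_ge0 // ltW.
by apply: pauliZ_tens_contract => w; apply: density_contract.
Qed.

End ObservableBounds.

Section LiftedState.
Variable C : numClosedFieldType.

Definition lifted_state n (T : C) (P N : 'M[C]_n) : 'M[C]_(2 * n) :=
  T^-1 *: (delta_mx 0 0 *t P + delta_mx 1 1 *t N).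

Lemma lifted_state_density n (T : C) (P N : 'M[C]_n) :
  0 < T -> psd P -> psd N -> \tr P + \tr N = T -> density (lifted_state T P N).
Proof.
move=> T_gt0 psdP psdN trPN; split.
  apply: psdZ; first by rewrite invr_ge0 ltW.
  by apply: psdD; apply: psd_tens_delta.
by rewrite mxtraceZ mxtraceD !trace_tens !trace_delta !mul1r trPN mulVf ?gt_eqF.
Qed.

(* Tr[rho' (T Z (x) R)] = Tr[(P - N) R]: the factor T cancels and Z picks the signs. *)
Lemma lifted_state_trace n (T : C) (P N R : 'M[C]_n) : T != 0 ->
  \tr (lifted_state T P N *m (T *: (pauliZ C *t R))) = \tr ((P - N) *m R).
Proof.
move=> T_neq0; rewrite /lifted_state -scalemxAr -scalemxAl scalerA mulfV // scale1r.
rewrite mulmxDl !tensmx_mul proj0_pauliZ proj1_pauliZ tensNmx mxtraceD raddfN /=.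
by rewrite !trace_tens !trace_delta !mul1r mulmxBl raddfB.
Qed.

End LiftedState.

Theorem mainTheorem4 (C : numClosedFieldType) (X Theta : Type) (n : nat)
    (rho : X -> 'M[C]_(2 ^ n)) (O : Theta -> 'M[C]_(2 ^ n)) (T : C) :
  (forall x, density (rho x)) ->
  (forall th, herm (O th)) ->
  0 < T ->
  (forall th, tracenorm_le (O th) T) ->
  let O' := fun x : X => T *: (pauliZ C *t rho x) in
  exists rho' : Theta -> 'M[C]_(2 * 2 ^ n),
    (forall th, density (rho' th)) /\
    (forall x, herm (O' x)) /\
    (forall x, opnorm_le (O' x) T) /\
    (forall x, pure (rho x) -> opnorm_attains (O' x) T) /\
    (forall x th, \tr (rho' th *m O' x) = \tr (rho x *m O th)).
Proof.
move=> dens hermO T_gt0 tnO O'.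
have splitting th : {PN : 'M[C]_(2 ^ n) * 'M[C]_(2 ^ n) |
    [/\ psd PN.1, psd PN.2, PN.1 - PN.2 = O th & \tr PN.1 + \tr PN.2 = T]}.
  apply: constructive_indefinite_description.
  have [|P [N PN]] := tracenorm_split _ (hermO th) (tnO th); first by rewrite expn_gt0.
  by exists (P, N).
exists (fun th => lifted_state T (sval (splitting th)).1 (sval (splitting th)).2).
split; [|split; [|split; [|split]]].
- move=> th; have [psdP psdN _ trPN] := svalP (splitting th).
  exact: lifted_state_density.
- by move=> x; apply: pauliZ_tens_herm.
- by move=> x; apply: pauliZ_tens_opnorm.
- by move=> x; apply: pauliZ_tens_pure_attains.
- move=> x th; have [_ _ PN _] := svalP (splitting th).
  by rewrite lifted_state_trace ?gt_eqF // PN mxtrace_mulC.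
Qed.
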